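(* Let $C=(1,c_2,c_3,c_4,c_5,c_6)=(1,c_2,2c_2-1,c_4,c_2+c_4-1,2c_4-1)$ be a system that is canonical and whose subsystem $(1,c_2,c_3,c_4,c_5)$ is noncanonical, and let $\ell=\lceil c_5/c_3\rceil$. Then $c_4\ge 3c_2-1$, $\mathrm{grd}_C(\ell c_3)\le\ell$, and $\mathrm{grd}_C(\ell c_3)=\ell c_3-c_5+1-\lfloor(\ell c_3-c_5)/c_2\rfloor(c_2-1)$.
   Context: A system is a tuple $C=(c_1,\dots,c_n)$ of integers with $1=c_1<c_2<\dots<c_n$; for $k\le n$, $(c_1,\dots,c_k)$ is a subsystem. For a positive integer $v$, $\mathrm{opt}_C(v)$ is the minimum of $\sum_i x_i$ over $x\in\mathbb{Z}_{\ge0}^n$ with $\sum_i c_ix_i=v$. The greedy representation of $v$ is produced by: for $i=n$ down to $1$, while $c_i\le$ remaining value, take a coin $c_i$. $\mathrm{grd}_C(v)$ is its number of coins. A positive integer $w$ is a counterexample if $\mathrm{opt}_C(w)<\mathrm{grd}_C(w)$; $C$ is canonical if it has none, noncanonical otherwise. *)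

From mathcomp Require Import all_boot.
From mathcomp Require Import all_algebra.
Set Implicit Arguments.
Unset Strict Implicit.
Unset Printing Implicit Defensive.

Definition is_system (C : seq nat) : bool :=
  (head 0 C == 1) && sorted ltn C.

Definition subsystem (C : seq nat) (k : nat) : seq nat := take k C.

Fixpoint greedy_desc (D : seq nat) (v : nat) : nat :=
  match D with
  | [::] => 0
  | c :: D' => v %/ c + greedy_desc D' (v %% c)
  end.

Definition grd (C : seq nat) (v : nat) : nat := greedy_desc (rev C) v.

Definition is_rep (C : seq nat) (x : seq nat) (v : nat) : Prop :=
  size x = size C /\ \sum_(i < size C) nth 0 C i * nth 0 x i = v.

Definition counterexample (C : seq nat) (w : nat) : Prop :=
  0 < w /\ exists x, is_rep C x w /\ sumn x < grd C w.

Definition canonical (C : seq nat) : Prop := forall w, ~ counterexample C w.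
Definition noncanonical (C : seq nat) : Prop := exists w, counterexample C w.

From mathcomp Require Import all_boot all_algebra zify.

Set Implicit Arguments.
Unset Strict Implicit.
Unset Printing Implicit Defensive.

(* For [c4 = 3 c2 - 2] the system is [1 + k d] for [k = 0, 1, 2, 3, 4, 6] with
   [d = c2 - 1], and its first five coins form a canonical system: a value
   [n + K d] paid by [n] coins has [K <= 4 n], and induction on [n] reduces it
   to a value below [4 d + 1], where the greedy algorithms of the two systems
   agree and the canonicity of the six-coin system applies.  For
   [2 c2 <= c4 <= 3 c2 - 3] the value [2 c3] is a counterexample.  Hence
   [c4 >= 3 c2 - 1], and then [c5 <= l c3 < c5 + c3 <= 2 c4 - 1]: the greedy
   algorithm pays [l c3] with one coin [c5] followed by coins [c2] and [1]. *)

Lemma greedy_desc0 D : greedy_desc D 0 = 0.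
Proof. by elim: D => //= c D; rewrite div0n mod0n => ->. Qed.

Lemma greedy_desc_cons_small c D v : v < c -> greedy_desc (c :: D) v = greedy_desc D v.
Proof. by move=> v_lt /=; rewrite divn_small // modn_small. Qed.

Lemma greedy_desc_cons_sub c D v : 0 < c -> c <= v ->
  greedy_desc (c :: D) v = (greedy_desc (c :: D) (v - c)).+1.
Proof.
move=> c_gt0 c_le /=; have -> : v = c + (v - c) by rewrite subnKC.
by rewrite addKn divnDl ?dvdnn // divnn c_gt0 modnDl add1n.
Qed.

Lemma greedy_desc_pair_one c v : greedy_desc [:: c; 1] v = v %/ c + v %% c.
Proof. by rewrite /= divn1 addn0. Qed.

Lemma grd_rcons_small C c v : v < c -> grd (rcons C c) v = grd C v.
Proof. by move=> v_lt; rewrite /grd rev_rcons greedy_desc_cons_small. Qed.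

Lemma sum_nth_mul_zip (C x : seq nat) : size x = size C ->
  \sum_(i < size C) nth 0 C i * nth 0 x i = sumn [seq p.1 * p.2 | p <- zip C x].
Proof.
elim: C x => [|c C IH] [|y x] //=; first by rewrite big_ord0.
by move=> [sz]; rewrite big_ord_recl IH.
Qed.

Lemma is_repE C x w :
  is_rep C x w <-> size x = size C /\ sumn [seq p.1 * p.2 | p <- zip C x] = w.
Proof. by rewrite /is_rep; split=> -[sz <-]; rewrite sum_nth_mul_zip. Qed.

Lemma canonical_grd_le C x w : canonical C -> 0 < w -> is_rep C x w -> grd C w <= sumn x.
Proof.
move=> C_can w_gt0 rep; rewrite leqNgt; apply/negP => lt.
by apply: (C_can w); split=> //; exists x.
Qed.

Lemma ceil_mul_bounds a b : 0 < b -> a <= (a + b - 1) %/ b * b < a + b.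
Proof.
move=> b_gt0; have := divn_eq (a + b - 1) b; have := ltn_pmod (a + b - 1) b_gt0.
lia.
Qed.

Lemma divn_add_modn s c : 0 < c -> s %/ c + s %% c = s - s %/ c * (c - 1).
Proof.
move=> c_gt0; have := divn_eq s c; have := leq_pmulr (s %/ c) c_gt0.
by rewrite mulnBr muln1; move: (s %/ c) (s %% c) => q r; lia.
Qed.

Section ArithmeticSystem.

Variable d : nat.
Hypothesis d_gt0 : 0 < d.

Local Notation C5 := [:: 1; d + 1; 2 * d + 1; 3 * d + 1; 4 * d + 1].
Local Notation C6 := [:: 1; d + 1; 2 * d + 1; 3 * d + 1; 4 * d + 1; 6 * d + 1].

Hypothesis C6_canonical : canonical C6.

Lemma grd_C5_small n K : K <= 4 * n -> n + K * d < 4 * d + 1 -> grd C5 (n + K * d) <= n.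
Proof.
move=> K_le small; have [n0|n_gt0] := posnP n.
  by move: K_le; rewrite n0 muln0 leqn0 => /eqP->; rewrite /grd greedy_desc0.
have K_lt4 : K < 4 by rewrite -(ltn_pmul2r d_gt0); lia.
(* For [K > 0], [n - 1] coins [1] and the coin [K d + 1]. *)
pose x := [:: n - (K != 0); nat_of_bool (K == 1); nat_of_bool (K == 2);
              nat_of_bool (K == 3); 0; 0].
have rep : is_rep C6 x (n + K * d).
  by apply/is_repE; split=> //=; case: K K_lt4 {K_le small x} => [|[|[|[|]]]] //= _; lia.
have grd_le : grd C6 (n + K * d) <= sumn x.
  by apply: (canonical_grd_le C6_canonical _ rep); lia.
rewrite -[grd C6 _]/(grd (rcons C5 (6 * d + 1)) _) grd_rcons_small in grd_le; last lia.
apply: leq_trans grd_le _.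
by rewrite /x; case: K K_lt4 {K_le small rep x} => [|[|[|[|]]]] //= _; lia.
Qed.

Lemma grd_C5_le n K : K <= 4 * n -> grd C5 (n + K * d) <= n.
Proof.
elim/ltn_ind: n K => n IH K K_le.
have [small|large] := ltnP (n + K * d) (4 * d + 1); first exact: grd_C5_small.
have [K_ge4|K_lt4] := leqP 4 K.
  have KdE : K * d = (K - 4) * d + 4 * d by rewrite -mulnDl subnK.
  rewrite [grd _ _]greedy_desc_cons_sub; [|lia|lia].
  have -> : n + K * d - (4 * d + 1) = (n - 1) + (K - 4) * d by lia.
  by apply: leq_ltn_trans (IH _ _ _ _) _; lia.
have Kd_le : K * d <= 3 * d by rewrite leq_mul2r; lia.
have -> : n + K * d = (n - d) + K.+1 * d by rewrite mulSn; lia.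
by rewrite (leq_trans (IH _ _ _ _)) //; lia.
Qed.

Lemma C5_canonical : canonical C5.
Proof.
move=> w [w_gt0 [x [/is_repE[sz rep]]]]; apply/negP; rewrite -leqNgt.
case: x sz rep => [|x0 [|x1 [|x2 [|x3 [|x4 [|]]]]]] //= _ rep.
have -> : w = (x0 + x1 + x2 + x3 + x4) + (x1 + 2 * x2 + 3 * x3 + 4 * x4) * d by lia.
by apply: leq_trans (grd_C5_le _) _; lia.
Qed.

End ArithmeticSystem.

Section SixCoinSystem.

Variables c2 c4 : nat.

Local Notation c3 := (2 * c2 - 1).
Local Notation c5 := (c2 + c4 - 1).
Local Notation C := [:: 1; c2; c3; c4; c5; 2 * c4 - 1].

Hypothesis C_system : is_system C.

Lemma system_bounds : 1 < c2 /\ c3 < c4.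
Proof. by move: C_system; rewrite /is_system /= => /and5P[]. Qed.

Lemma grd_from_c5 v : c5 <= v < 2 * c4 - 1 -> v - c5 < c3 ->
  grd C v = (v - c5) %/ c2 + (v - c5) %% c2 + 1.
Proof.
case: system_bounds => c2_gt1 c3_lt_c4 /andP[c5_le v_lt] r_lt.
rewrite -[grd C v]/(greedy_desc [:: 2 * c4 - 1; c5; c4; c3; c2; 1] v).
rewrite greedy_desc_cons_small // greedy_desc_cons_sub; [|lia|lia].
have [r_lt_c5 r_lt_c4] : v - c5 < c5 /\ v - c5 < c4 by lia.
rewrite (greedy_desc_cons_small _ r_lt_c5) (greedy_desc_cons_small _ r_lt_c4).
by rewrite (greedy_desc_cons_small _ r_lt) greedy_desc_pair_one addn1.
Qed.

Lemma canonical_c4_gt : canonical C -> 3 * c2 - 3 < c4.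
Proof.
move=> C_can; rewrite ltnNge; apply/negP => c4_le.
have [c2_gt1 c3_lt_c4] := system_bounds.
have rep : is_rep C [:: 0; 0; 2; 0; 0; 0] (2 * c3) by apply/is_repE; split=> //=; lia.
have := canonical_grd_le C_can _ rep; rewrite grd_from_c5; [|lia|lia].
have r_lt : 2 * c3 - c5 < c2 by lia.
by rewrite divn_small // modn_small //=; lia.
Qed.

Lemma noncanonical_sub5_c4_neq : canonical C -> noncanonical (subsystem C 5) ->
  c4 != 3 * c2 - 2.
Proof.
move=> C_can [w cex]; apply/eqP => c4E.
have [c2_gt1 _] := system_bounds.
have CE : C = [:: 1; (c2 - 1) + 1; 2 * (c2 - 1) + 1; 3 * (c2 - 1) + 1;
                  4 * (c2 - 1) + 1; 6 * (c2 - 1) + 1].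
  by congr [:: _; _; _; _; _; _]; lia.
rewrite CE in C_can cex.
have d_gt0 : 0 < c2 - 1 by lia.
exact: (C5_canonical d_gt0 C_can) w cex.
Qed.

Local Notation l := ((c5 + c3 - 1) %/ c3).

Lemma grd_ceil_le : canonical C -> grd C (l * c3) <= l.
Proof.
move=> C_can; have [c2_gt1 c3_lt_c4] := system_bounds.
have c3_gt0 : 0 < c3 by lia.
have /andP[lc3_ge _] := ceil_mul_bounds c5 c3_gt0.
have rep : is_rep C [:: 0; 0; l; 0; 0; 0] (l * c3) by apply/is_repE; split=> //=; lia.
by apply: leq_trans (canonical_grd_le C_can _ rep) _ => /=; lia.
Qed.

Lemma grd_ceilE : 3 * c2 - 1 <= c4 ->
  (Posz (grd C (l * c3)) = Posz (l * c3 - c5 + 1) - Posz ((l * c3 - c5) %/ c2 * (c2 - 1)))%R.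
Proof.
move=> c4_ge; have [c2_gt1 c3_lt_c4] := system_bounds.
have c3_gt0 : 0 < c3 by lia.
have /andP[lc3_ge lc3_lt] := ceil_mul_bounds c5 c3_gt0.
rewrite grd_from_c5; [|lia|lia].
have := divn_add_modn (l * c3 - c5) (ltnW c2_gt1).
have := leq_divM (l * c3 - c5) c2.
lia.
Qed.

End SixCoinSystem.

Theorem lemma9 (c2 c4 : nat) :
  let C := [:: 1; c2; 2 * c2 - 1; c4; c2 + c4 - 1; 2 * c4 - 1] in
  let c3 := 2 * c2 - 1 in
  let c5 := c2 + c4 - 1 in
  let l := (c5 + c3 - 1) %/ c3 in
  is_system C ->
  canonical C ->
  noncanonical (subsystem C 5) ->
  [/\ 3 * c2 - 1 <= c4,
      grd C (l * c3) <= l &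
      (Posz (grd C (l * c3))
        = Posz (l * c3 - c5 + 1) - Posz ((l * c3 - c5) %/ c2 * (c2 - 1)))%R].
Proof.
cbv zeta => C_system C_can C5_noncan.
have c4_ge : 3 * c2 - 1 <= c4.
  have := canonical_c4_gt C_system C_can.
  have := noncanonical_sub5_c4_neq C_system C_can C5_noncan.
  lia.
by split=> //; [apply: grd_ceil_le | apply: grd_ceilE].
Qed.
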